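(* Let $M$ be a $4$-dimensional manifold with local coordinates $(x^1,\dots,x^4)$, $e_i=\partial/\partial x^i$, and Riemannian metric $g$ with components \[(g_{ij})=\begin{pmatrix} A&B&C&B\\ B&A&B&C\\ C&B&A&B\\ B&C&B&A\end{pmatrix},\] $A,B,C$ smooth functions with $A>C>B>0$. Let $P$ be the almost product structure with component matrix having rows $(0,0,1,0),(0,0,0,1),(1,0,0,0),(0,1,0,0)$. Then $(M,g,P)$ belongs to the class $\mathcal{W}_0$, i.e. $F(x,y,z)=g((\nabla_xP)y,z)=0$ identically (equivalently $\nabla P=0$, $\nabla$ the Levi-Civita connection of $g$), if and only if \[A_3=C_1,\quad A_1=C_3,\quad B_3=B_1,\quad B_4=B_2,\quad A_2=C_4,\quad A_4=C_2,\] where $A_i=\partial A/\partial x^i$, $B_i=\partial B/\partial x^i$, $C_i=\partial C/\partial x^i$. *)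

From HB Require Import structures.
From mathcomp Require Import all_boot all_order all_algebra.
From mathcomp Require Import all_classical all_reals all_analysis.
Set Implicit Arguments. Unset Strict Implicit. Unset Printing Implicit Defensive.
Import Order.TTheory GRing.Theory Num.Theory.
Import numFieldNormedType.Exports.
Local Open Scope ring_scope.

(* Points of the coordinate chart are row vectors p = (x^1,...,x^4),
   indices 0..3 stand for 1..4. *)

Definition ix1 : 'I_4 := inord 0.
Definition ix2 : 'I_4 := inord 1.
Definition ix3 : 'I_4 := inord 2.
Definition ix4 : 'I_4 := inord 3.

Section Defs.
Variable R : realType.
Notation pt := 'rV[R]_4.

Definition ecoord (i : 'I_4) : pt := delta_mx 0 i.

Definition pderiv (f : pt -> R) (i : 'I_4) (p : pt) : R := derive f p (ecoord i).

Definition gmat (A B C : pt -> R) (p : pt) : 'M[R]_4 :=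
  \matrix_(i < 4, j < 4)
    (let d := (((j : nat) + 4 - (i : nat)) %% 4)%N in
     if d == 0%N then A p else if d == 2%N then C p else B p).

(* the almost product structure P: P e_1 = e_3, P e_2 = e_4, P e_3 = e_1, P e_4 = e_2;
   Pmat j k = k-th component of P e_j *)
Definition Pmat : 'M[R]_4 :=
  \matrix_(j < 4, k < 4) (if (((j : nat) + 2) %% 4 == (k : nat))%N then 1 else 0).

(* Christoffel symbols of the first kind  Gamma_{ij,l} = g(nabla_{e_i} e_j, e_l) *)
Definition christ1 (g : pt -> 'M[R]_4) (p : pt) (i j l : 'I_4) : R :=
  2^-1 * (pderiv (fun q => g q j l) i p + pderiv (fun q => g q i l) j p
          - pderiv (fun q => g q i j) l p).

Definition christ2 (g : pt -> 'M[R]_4) (p : pt) (k i j : 'I_4) : R :=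
  \sum_(l < 4) invmx (g p) k l * christ1 g p i j l.

(* components of the covariant derivative of the (1,1)-tensor P (constant
   component matrix): (nabla_{e_i} P) e_j = sum_k nablaP p i j k e_k *)
Definition nablaP (g : pt -> 'M[R]_4) (P : 'M[R]_4) (p : pt) (i j k : 'I_4) : R :=
  \sum_(s < 4) christ2 g p k i s * P j s - \sum_(s < 4) christ2 g p s i j * P s k.

Definition Ftensor (g : pt -> 'M[R]_4) (P : 'M[R]_4) (p : pt) (x y z : pt) : R :=
  \sum_(i < 4) \sum_(j < 4) \sum_(k < 4) \sum_(l < 4)
    x 0 i * y 0 j * z 0 l * nablaP g P p i j k * g p k l.

Definition inW0 (U : set pt) (g : pt -> 'M[R]_4) (P : 'M[R]_4) : Prop :=
  forall p, U p -> forall x y z : pt, Ftensor g P p x y z = 0.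

End Defs.

(* P is the permutation matrix of the involution sigma = (1 3)(2 4), and g commutes
   with P, i.e. g_{sigma j, l} = g_{j, sigma l}.  Lowering the free index of nabla P
   with g gives F(e_i, e_j, e_l) = Gamma_{i sigma(j), l} - Gamma_{i j, sigma(l)} in terms
   of the Christoffel symbols of the first kind, and in this difference the derivatives
   along e_i cancel, leaving
     2 F_{ijl} = d_{sigma j} g_{il} - d_l g_{i sigma j} - d_j g_{i sigma l} + d_{sigma l} g_{ij}.
   The diagonal components F_{ijj} = d_{sigma j} g_{ij} - d_j g_{i sigma j} for six
   choices of (i, j) are exactly the six equations, and conversely these equations make
   all 64 components vanish.  The inequalities A > C > B > 0 only serve to make g
   invertible. *)

From HB Require Import structures.
From mathcomp Require Import all_boot all_order all_fingroup all_algebra.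
From mathcomp Require Import all_classical all_reals all_analysis.
From mathcomp Require Import ring lra.
Set Implicit Arguments. Unset Strict Implicit. Unset Printing Implicit Defensive.
Import Order.TTheory GRing.Theory Num.Theory.
Import numFieldNormedType.Exports.
Local Open Scope ring_scope.

Lemma val_ix1 : ix1 = 0%N :> nat. Proof. by rewrite inordK. Qed.
Lemma val_ix2 : ix2 = 1%N :> nat. Proof. by rewrite inordK. Qed.
Lemma val_ix3 : ix3 = 2%N :> nat. Proof. by rewrite inordK. Qed.
Lemma val_ix4 : ix4 = 3%N :> nat. Proof. by rewrite inordK. Qed.
Definition val_ixE := (val_ix1, val_ix2, val_ix3, val_ix4).

Lemma ord4P (i : 'I_4) : [\/ i = ix1, i = ix2, i = ix3 | i = ix4].
Proof.
by case: i => -[|[|[|[|//]]]] ?; [apply: Or41|apply: Or42|apply: Or43|apply: Or44];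
  apply: val_inj; rewrite /= val_ixE.
Qed.

Lemma big_ord4 (V : nmodType) (F : 'I_4 -> V) :
  \sum_(k < 4) F k = F ix1 + F ix2 + F ix3 + F ix4.
Proof.
rewrite !big_ord_recr big_ord0 /= add0r.
by congr (_ + _ + _ + _); congr F; apply: val_inj; rewrite /= val_ixE.
Qed.

Section LeviCivita.
Variable R : realType.
Notation pt := 'rV[R]_4.
Implicit Types (g : pt -> 'M[R]_4) (P : 'M[R]_4) (p : pt).

Definition Fcoord g P p (i j l : 'I_4) : R := \sum_(k < 4) nablaP g P p i j k * g p k l.

Lemma Ftensor_sum g P p x y z : Ftensor g P p x y z =
  \sum_(i < 4) x 0 i * \sum_(j < 4) y 0 j * \sum_(l < 4) z 0 l * Fcoord g P p i j l.
Proof.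
apply: eq_bigr => i _; rewrite mulr_sumr; apply: eq_bigr => j _.
rewrite exchange_big /= !mulr_sumr; apply: eq_bigr => l _.
by rewrite !mulr_sumr; apply: eq_bigr => k _; rewrite !mulrA.
Qed.

Lemma sum_ecoord (i : 'I_4) (F : 'I_4 -> R) : \sum_(k < 4) ecoord R i 0 k * F k = F i.
Proof.
rewrite (bigD1 i) //= big1 => [|k /negbTE nki]; last by rewrite mxE nki andbF mul0r.
by rewrite mxE !eqxx mul1r addr0.
Qed.

Lemma Ftensor_ecoord g P p i j l :
  Ftensor g P p (ecoord R i) (ecoord R j) (ecoord R l) = Fcoord g P p i j l.
Proof. by rewrite Ftensor_sum !sum_ecoord. Qed.

Lemma inW0P (U : set pt) g P :
  inW0 U g P <-> forall p, U p -> forall i j l, Fcoord g P p i j l = 0.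
Proof.
split=> [W0 p Up i j l | F0 p Up x y z].
  by rewrite -Ftensor_ecoord W0.
rewrite Ftensor_sum big1 // => i _; rewrite big1 ?mulr0 // => j _.
by rewrite big1 ?mulr0 // => l _; rewrite F0 // mulr0.
Qed.

Lemma christ2_lower g p i j l : (g p)^T = g p -> g p \in unitmx ->
  \sum_(k < 4) christ2 g p k i j * g p k l = christ1 g p i j l.
Proof.
move=> gT gU; have gC k : g p k l = g p l k by rewrite -{1}gT mxE.
transitivity (\sum_(m < 4) christ1 g p i j m * (g p *m invmx (g p)) l m).
  rewrite /christ2; under eq_bigr do rewrite mulr_suml.
  rewrite exchange_big /=; apply: eq_bigr => m _; rewrite mxE mulr_sumr.
  by apply: eq_bigr => k _; rewrite gC; ring.
rewrite mulmxV // (bigD1 l) //= big1 => [|m /negbTE nml]; last by rewrite mxE eq_sym nml mulr0.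
by rewrite mxE eqxx mulr1 addr0.
Qed.

Variable s : {perm 'I_4}.

Lemma sum_perm_mxl (j : 'I_4) (F : 'I_4 -> R) :
  \sum_(k < 4) perm_mx s j k * F k = F (s j).
Proof.
rewrite (bigD1 (s j)) //= big1 => [|k /negbTE nk]; last by rewrite !mxE eq_sym nk mul0r.
by rewrite !mxE eqxx mul1r addr0.
Qed.

Lemma sum_perm_mxr (l : 'I_4) (F : 'I_4 -> R) :
  \sum_(m < 4) F m * perm_mx s m l = F ((s^-1)%g l).
Proof.
rewrite (bigD1 ((s^-1)%g l)) //= big1 => [|m /negbTE nm].
  by rewrite !mxE permKV eqxx mulr1 addr0.
by rewrite !mxE (canF_eq (permK s)) nm mulr0.
Qed.

Lemma perm_mx_commP (G : 'M[R]_4) :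
  perm_mx s *m G = G *m perm_mx s <-> forall t l, G (s t) l = G t ((s^-1)%g l).
Proof.
have -> : G *m perm_mx s = col_perm (s^-1)%g G by rewrite col_permE invgK.
rewrite -row_permE; split=> [/matrixP E t l | E].
  by have := E t l; rewrite !mxE.
by apply/matrixP => t l; rewrite !mxE.
Qed.

Lemma nablaP_perm_mx g p i j k :
  nablaP g (perm_mx s) p i j k = christ2 g p k i (s j) - christ2 g p ((s^-1)%g k) i j.
Proof.
rewrite /nablaP sum_perm_mxr; congr (_ - _).
by under eq_bigr do rewrite mulrC; rewrite sum_perm_mxl.
Qed.

Lemma Fcoord_perm_mx g p i j l :
  (g p)^T = g p -> g p \in unitmx -> (forall q, perm_mx s *m g q = g q *m perm_mx s) ->
  Fcoord g (perm_mx s) p i j l =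
  2^-1 * (pderiv (fun q => g q i l) (s j) p - pderiv (fun q => g q i (s j)) l p
          - pderiv (fun q => g q i ((s^-1)%g l)) j p + pderiv (fun q => g q i j) ((s^-1)%g l) p).
Proof.
move=> gT gU gP.
have gE q t m : g q (s t) m = g q t ((s^-1)%g m) by move: t m; apply/perm_mx_commP.
rewrite /Fcoord; under eq_bigr do rewrite nablaP_perm_mx mulrBl.
rewrite sumrB christ2_lower // (reindex_inj (@perm_inj _ s)) /=.
under eq_bigr do rewrite permK gE.
rewrite christ2_lower // /christ1.
have -> : (fun q => g q (s j) l) = (fun q => g q j ((s^-1)%g l)) by apply: funext => q; apply: gE.
ring.
Qed.

Lemma Fcoord_perm_mx_diag g p i j :
  (s^-1)%g = s -> (g p)^T = g p -> g p \in unitmx ->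
  (forall q, perm_mx s *m g q = g q *m perm_mx s) ->
  Fcoord g (perm_mx s) p i j j =
  pderiv (fun q => g q i j) (s j) p - pderiv (fun q => g q i (s j)) j p.
Proof. by move=> sV gT gU gP; rewrite Fcoord_perm_mx // sV; field. Qed.

End LeviCivita.

Definition shift2 (j : 'I_4) : 'I_4 := inord ((j + 2) %% 4)%N.

Lemma val_shift2 j : shift2 j = ((j + 2) %% 4)%N :> nat.
Proof. by rewrite inordK // ltn_pmod. Qed.

Lemma shift2K : involutive shift2.
Proof.
move=> j; apply: val_inj => /=; rewrite !val_shift2 modnDml -addnA modnDr.
exact: modn_small.
Qed.

Definition Pperm : {perm 'I_4} := perm (inv_inj shift2K).

Lemma PpermV : (Pperm^-1)%g = Pperm.
Proof. by apply/permP => j; apply: (canLR (permK Pperm)); rewrite !permE shift2K. Qed.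

Lemma PpermE : (Pperm ix1 = ix3) * (Pperm ix2 = ix4) * (Pperm ix3 = ix1) * (Pperm ix4 = ix2).
Proof. by do !split; rewrite permE; apply: val_inj => /=; rewrite val_shift2 !val_ixE. Qed.

Lemma Pmat_perm_mx (R : realType) : Pmat R = perm_mx Pperm.
Proof.
apply/matrixP => j k; rewrite !mxE permE -val_eqE /= val_shift2.
by case: eqP.
Qed.

Section Circulant.
Variables (R : realType) (A B C : 'rV[R]_4 -> R).

Lemma gmat_entry (i j : 'I_4) : (fun q => gmat A B C q i j) =
  if ((j + 4 - i) %% 4 == 0)%N then A else if ((j + 4 - i) %% 4 == 2)%N then C else B.
Proof. by apply: funext => q; rewrite mxE /=; case: ifP => _ //; case: ifP. Qed.

Lemma gmat_sym p : (gmat A B C p)^T = gmat A B C p.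
Proof.
apply/matrixP => i j; rewrite !mxE.
by case: (ord4P i) => ->; case: (ord4P j) => ->; rewrite !val_ixE.
Qed.

Lemma gmat_perm_mx_comm p : perm_mx Pperm *m gmat A B C p = gmat A B C p *m perm_mx Pperm.
Proof.
apply/perm_mx_commP => t l; rewrite PpermV !mxE.
by case: (ord4P t) => ->; case: (ord4P l) => ->; rewrite !PpermE !val_ixE.
Qed.

Lemma gmat_unit p :
  A p + 2 * B p + C p != 0 -> A p - C p != 0 -> A p - 2 * B p + C p != 0 ->
  gmat A B C p \in unitmx.
Proof.
move=> l0 l1 l2.
(* g is circulant with eigenvalues A + 2B + C, A - C (twice) and A - 2B + C; its
   inverse is the circulant with first row (a', b', c', b'). *)
pose a' := ((A p + 2 * B p + C p)^-1 + 2 * (A p - C p)^-1 + (A p - 2 * B p + C p)^-1) / 4.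
pose b' := ((A p + 2 * B p + C p)^-1 - (A p - 2 * B p + C p)^-1) / 4.
pose c' := ((A p + 2 * B p + C p)^-1 - 2 * (A p - C p)^-1 + (A p - 2 * B p + C p)^-1) / 4.
suff /mulmx1_unit[] : gmat A B C p *m gmat (fun=> a') (fun=> b') (fun=> c') p = 1%:M by [].
apply/matrixP => i j; rewrite !mxE big_ord4 !mxE.
by case: (ord4P i) => ->; case: (ord4P j) => ->;
  rewrite -!val_eqE /= !val_ixE /= /a' /b' /c'; field; rewrite l0 l1 l2.
Qed.

Lemma Fcoord_gmat_eq0 p : gmat A B C p \in unitmx ->
  (forall i j l, Fcoord (gmat A B C) (Pmat R) p i j l = 0) <->
  pderiv A ix3 p = pderiv C ix1 p /\ pderiv A ix1 p = pderiv C ix3 p /\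
  pderiv B ix3 p = pderiv B ix1 p /\ pderiv B ix4 p = pderiv B ix2 p /\
  pderiv A ix2 p = pderiv C ix4 p /\ pderiv A ix4 p = pderiv C ix2 p.
Proof.
move=> gU; rewrite Pmat_perm_mx.
have FE i j l := Fcoord_perm_mx i j l (gmat_sym p) gU gmat_perm_mx_comm.
have FEdiag i j := Fcoord_perm_mx_diag i j PpermV (gmat_sym p) gU gmat_perm_mx_comm.
split=> [F0 | [e1 [e2 [e3 [e4 [e5 e6]]]]] i j l].
  have D i j : pderiv (fun q => gmat A B C q i j) (Pperm j) p =
               pderiv (fun q => gmat A B C q i (Pperm j)) j p.
    by apply/subr0_eq; rewrite -FEdiag F0.
  move: (D ix1 ix1) (D ix3 ix1) (D ix2 ix1) (D ix1 ix2) (D ix4 ix2) (D ix2 ix2).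
  rewrite !PpermE !gmat_entry !val_ixE /= => e1 /esym e2 e3 e4 /esym e5 e6.
  by do !split.
rewrite FE PpermV.
by case: (ord4P i) => ->; case: (ord4P j) => ->; case: (ord4P l) => ->;
  rewrite !PpermE !gmat_entry !val_ixE /= ?e1 ?e2 ?e3 ?e4 ?e5 ?e6; ring.
Qed.

End Circulant.

Theorem theorem3p4 (R : realType) (U : set 'rV[R]_4) (A B C : 'rV[R]_4 -> R) :
  open U ->
  (forall p, U p -> differentiable A p /\ differentiable B p /\ differentiable C p) ->
  (forall p, U p -> A p > C p /\ C p > B p /\ B p > 0) ->
  inW0 U (gmat A B C) (Pmat R) <->
  (forall p, U p ->
     pderiv A ix3 p = pderiv C ix1 p /\ pderiv A ix1 p = pderiv C ix3 p /\
     pderiv B ix3 p = pderiv B ix1 p /\ pderiv B ix4 p = pderiv B ix2 p /\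
     pderiv A ix2 p = pderiv C ix4 p /\ pderiv A ix4 p = pderiv C ix2 p).
Proof.
(* [pderiv] is total. *)
move=> _ _ ABC.
have gU p : U p -> gmat A B C p \in unitmx.
  by case/ABC=> AC [CB B0]; apply: gmat_unit; apply: lt0r_neq0; lra.
by rewrite inW0P; split=> H p Up; apply/(Fcoord_gmat_eq0 (gU p Up))/H.
Qed.
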